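(* Let $X$ be any real random variable, $a\neq 0$, $N\sim\mathcal N(0,1)$ independent of $X$, and $Y=aX+N$. For $y\in\mathbb R$ let $X_y$ have distribution $P_{X\mid Y=y}$. Then for every $y\in\mathbb{R}$, $X_y$ is sub-Gaussian; moreover for all $x>0$, $$\Pr(|X_y|\ge x)\le \sqrt{\tfrac{2}{\pi}}\,\frac{e^{y^2/2}}{h_0(y;a)}\,e^{-a^2x^2/4},$$ for every $n=1,2,\dots$, $$\mathbb{E}|X_y|^n\le \frac{n\,e^{y^2/2}}{h_0(y;a)}\Big(\frac{\sqrt2}{|a|}\Big)^n\sqrt{(n-1)!},$$ and $\mathbb{E}\big|X_y-\mathbb{E}X_y\big|^n\le 2^n\,\mathbb{E}|X_y|^n$.
   Context: $\varphi(t)=(2\pi)^{-1/2}e^{-t^2/2}$ is the standard Gaussian density, and $h_0(y;a)=\mathbb{E}[\varphi(y-aX)]$ (the density of $Y=aX+N$ at $y$, which is strictly positive). A random variable $W$ is sub-Gaussian if there exist $c,C>0$ with $\Pr(|W|>\lambda)\le Ce^{-c\lambda^2}$ for all $\lambda>0$. *)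

From HB Require Import structures.
From mathcomp Require Import all_boot all_order all_algebra.
From mathcomp Require Import all_classical all_reals all_analysis.
Set Implicit Arguments. Unset Strict Implicit. Unset Printing Implicit Defensive.
Import Order.TTheory GRing.Theory Num.Theory.
Import numFieldNormedType.Exports.
Local Open Scope classical_set_scope.
Local Open Scope ring_scope.

Section defs.
Variable R : realType.

Definition phi (t : R) : R := expR (- (t ^+ 2) / 2) / Num.sqrt (pi *+ 2).

Variable mu : {measure set R -> \bar R}. (* law of X *)

Definition h0 (y a : R) : R := fine (\int[mu]_x (phi (y - a * x))%:E).

(* Law of X_y ~ P_{X|Y=y} (Bayes version):
   P(X_y \in A) = E[phi(y - aX) 1_A(X)] / h0(y;a) *)
Definition cond_prob (a y : R) (A : set R) : \bar R :=
  ((h0 y a)^-1)%:E * \int[mu]_(x in A) (phi (y - a * x))%:E.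

Definition cond_abs_moment (a y : R) (n : nat) : \bar R :=
  ((h0 y a)^-1)%:E * \int[mu]_x ((`|x| ^+ n) * phi (y - a * x))%:E.

Definition cond_mean (a y : R) : R :=
  (h0 y a)^-1 * Rintegral mu setT (fun x => x * phi (y - a * x)).

Definition cond_central_abs_moment (a y : R) (n : nat) : \bar R :=
  ((h0 y a)^-1)%:E *
  \int[mu]_x ((`|x - cond_mean a y| ^+ n) * phi (y - a * x))%:E.

End defs.

Definition subgaussian_law (R : realType) (Q : set R -> \bar R) : Prop :=
  exists c C : R, 0 < c /\ 0 < C /\
    forall l : R, 0 < l -> (Q [set w : R | (l < `|w|)%R] <= (C * expR (- c * l ^+ 2))%:E)%E.

From HB Require Import structures.
From mathcomp Require Import all_boot all_order all_algebra.
From mathcomp Require Import all_classical all_reals all_analysis.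
From mathcomp Require Import measurable_realfun ring lra.
Import Order.TTheory GRing.Theory Num.Theory.
Import numFieldNormedType.Exports.
Local Open Scope classical_set_scope.
Local Open Scope ring_scope.

(* Completing the square gives the pointwise Gaussian bound
   phi(y - a x) <= e^{y^2/2} / sqrt(2 pi) * e^{-a^2 x^2 / 4}, uniformly in x.
   Integrating it over {|x| >= l} against the law of X gives the tail bound,
   and combining it with w^n e^{-w} <= n! (at w = a^2 x^2 / 2) bounds
   |x|^n phi(y - a x) by a constant, which gives the moment bound.  For the
   central moments, |x - m|^n <= 2^(n-1) (|x|^n + |m|^n), |E X_y| <= E|X_y|
   and Jensen's inequality (E|X_y|)^n <= E|X_y|^n. *)

Section gaussian_inequalities.
Context {R : realType}.

Lemma expr_le_fact_expR (w : R) n : 0 <= w -> w ^+ n <= n`!%:R * expR w.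
Proof.
move=> w0; case: n => [|k]; first by rewrite expr0 fact0 mul1r -expR0 ler_expR.
have fact_gt0 : 0 < (k.+1)`!%:R :> R by rewrite ltr0n fact_gt0.
rewrite mulrC -ler_pdivrMr //; apply: le_trans (expR_ge1Dxn k w0).
by rewrite lerDr.
Qed.

Lemma sqrtr_le_self (x : R) : 1 <= x -> Num.sqrt x <= x.
Proof.
move=> x1; rewrite -[leRHS]ger0_norm; last lra.
by rewrite -sqrtr_sqr ler_sqrt ?sqr_ge0 //; nra.
Qed.

Lemma sqrt2pi_ge1 : 1 <= Num.sqrt (pi *+ 2) :> R.
Proof.
rewrite -sqrtr1 ler_sqrt; last by rewrite mulrn_wge0 // pi_ge0.
by have := @pi_ge2 R; rewrite mulr2n; lra.
Qed.

Lemma invr_sqrt2pi_le : (Num.sqrt (pi *+ 2))^-1 <= Num.sqrt (2 / pi) :> R.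
Proof.
have pi_gt0 := @pi_gt0 R.
have s_gt0 : 0 < Num.sqrt (pi *+ 2) :> R by apply: lt_le_trans sqrt2pi_ge1.
rewrite -(ler_pM2r s_gt0) mulVf ?gt_eqF // -sqrtrM ?divr_ge0 ?ltW //.
have -> : 2 / pi * (pi *+ 2) = 2 ^+ 2 :> R.
  by rewrite -[pi *+ 2]mulr_natr mulrA divfK ?gt_eqF // expr2.
by rewrite sqrtr_sqr ger0_norm //; lra.
Qed.

Lemma phi_ge0 (t : R) : 0 <= phi t.
Proof. by rewrite /phi divr_ge0 ?expR_ge0 ?sqrtr_ge0. Qed.

Lemma phi_shift_le (y a t : R) :
  phi (y - a * t) <=
  expR (y ^+ 2 / 2) / Num.sqrt (pi *+ 2) * expR (- (a ^+ 2 * t ^+ 2) / 4).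
Proof.
rewrite /phi mulrAC ler_pM2r; last by rewrite invr_gt0 sqrtr_gt0 mulrn_wgt0 // pi_gt0.
rewrite -expRD ler_expR.
(* the difference of the exponents is (y - a t / 2)^2 *)
have := sqr_ge0 (y - a * t / 2); nra.
Qed.

Lemma expr_gauss_le (a t : R) n : a != 0 ->
  `|t| ^+ n * expR (- (a ^+ 2 * t ^+ 2) / 4) <=
  (Num.sqrt 2 / `|a|) ^+ n * Num.sqrt n`!%:R.
Proof.
move=> a_neq0; have a2_gt0 : 0 < a ^+ 2 by rewrite exprn_even_gt0.
rewrite -(@ler_pXn2r _ 2) // ?nnegrE ?mulr_ge0 ?exprn_ge0 ?expR_ge0 ?sqrtr_ge0
  ?divr_ge0 ?sqrtr_ge0 //.
(* after squaring, both sides are (2 / a^2)^n times w^n e^{-w}, resp. n!,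
   where w = a^2 t^2 / 2 *)
set w := a ^+ 2 * t ^+ 2 / 2.
have w_ge0 : 0 <= w by rewrite divr_ge0 // mulr_ge0 ?sqr_ge0 // ltW.
have -> : (`|t| ^+ n * expR (- (a ^+ 2 * t ^+ 2) / 4)) ^+ 2 =
          (2 / a ^+ 2) ^+ n * (w ^+ n * expR (- w)).
  have ew : 2 / a ^+ 2 * w = t ^+ 2 by rewrite /w; field.
  have ee : 2%:R * (- (a ^+ 2 * t ^+ 2) / 4) = - w by rewrite /w; field.
  rewrite [RHS]mulrA -[in RHS]exprMn ew -ee expRM_natl.
  by rewrite exprMn -exprM mulnC exprM real_normK ?num_real // -exprM mulnC.
have -> : ((Num.sqrt 2 / `|a|) ^+ n * Num.sqrt n`!%:R) ^+ 2 =
          (2 / a ^+ 2) ^+ n * n`!%:R.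
  rewrite exprMn -exprM mulnC exprM sqr_sqrtr ?ler0n //.
  by rewrite expr_div_n sqr_sqrtr ?ler0n // real_normK ?num_real.
rewrite ler_pM2l ?exprn_gt0 ?divr_gt0 // expRN -ler_pdivlMr ?invr_gt0 ?expR_gt0 //.
by rewrite invrK expr_le_fact_expR.
Qed.

Lemma exprDn_le (u v : R) n : 0 <= u -> 0 <= v ->
  (u + v) ^+ n * 2 <= 2 ^+ n * (u ^+ n + v ^+ n).
Proof.
move=> u0 v0; elim: n => [|n IHn]; first by rewrite !expr0 mul1r; lra.
(* Chebyshev: u - v and u^n - v^n have the same sign *)
have cheb : (u + v) * (u ^+ n + v ^+ n) <= 2 * (u ^+ n.+1 + v ^+ n.+1).
  have : 0 <= (u - v) * (u ^+ n - v ^+ n).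
    have [uv|vu] := leP u v.
      by apply: mulr_le0; rewrite subr_le0 ?lerXn2r.
    by apply: mulr_ge0; rewrite subr_ge0 ?lerXn2r // ltW.
  rewrite !exprS; nra.
rewrite exprS -mulrA; apply: le_trans (ler_wpM2l _ IHn) _; first exact: addr_ge0.
by rewrite mulrCA exprS [2 * _]mulrC -mulrA ler_wpM2l ?exprn_ge0.
Qed.

Lemma expr_ge_tangent (u c : R) k : 0 <= u -> 0 <= c ->
  c ^+ k.+1 + k.+1%:R * c ^+ k * (u - c) <= u ^+ k.+1.
Proof.
move=> u0 c0; elim: k => [|k IHk]; first by rewrite !expr1 expr0 mulr1 mul1r; lra.
apply: le_trans (_ : u * (c ^+ k.+1 + k.+1%:R * c ^+ k * (u - c)) <= _); last first.
  by rewrite [leRHS]exprS ler_wpM2l.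
have -> : u * (c ^+ k.+1 + k.+1%:R * c ^+ k * (u - c)) =
    c ^+ k.+2 + k.+2%:R * c ^+ k.+1 * (u - c) + k.+1%:R * c ^+ k * (u - c) ^+ 2.
  by rewrite !exprS -[k.+2]addn1 -[k.+1]addn1 !natrD; ring.
by rewrite lerDl mulr_ge0 ?sqr_ge0 // mulr_ge0 ?exprn_ge0.
Qed.

End gaussian_inequalities.

Section probability_integral.
Context d (T : measurableType d) (R : realType) (P : probability T R).

Lemma integral_EFin_Rintegral (f : T -> R) :
  P.-integrable setT (EFin \o f) ->
  (\int[P]_x (f x)%:E)%E = (Rintegral P setT f)%:E.
Proof. by move=> If; rewrite fineK //; exact: integrable_fin_num. Qed.

Lemma integral_le_bound_probability (D : set T) (g : T -> R) (M : R) :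
  measurable D -> measurable_fun D g -> 0 <= M ->
  (forall x, D x -> 0 <= g x <= M) -> (\int[P]_(x in D) (g x)%:E <= M%:E)%E.
Proof.
move=> mD mg M_ge0 gM.
apply: (@le_trans _ _ (\int[P]_(x in D) (cst M%:E x))%E).
  apply: ge0_le_integral => //.
  - by move=> x /gM /andP[g_ge0 _]; rewrite lee_fin.
  - exact/measurable_EFinP.
  - by move=> x /gM /andP[_ gM']; rewrite lee_fin.
rewrite integral_cst // -[leRHS]mule1 lee_wpmul2l ?lee_fin //.
exact: probability_le1.
Qed.

End probability_integral.

Section normr_measurable_sets.
Context {R : realType}.

Lemma measurable_normr_ge (x : R) : measurable [set t : R | x <= `|t|].
Proof.
rewrite (_ : [set t : R | x <= `|t|] = setT `&` (@Num.norm _ R) @^-1` `[x, +oo[%classic).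
  by apply: normr_measurable => //; exact: measurable_itv.
by apply/seteqP; split => t /=; rewrite in_itv /= andbT; [move=> ->|case].
Qed.

Lemma measurable_normr_gt (x : R) : measurable [set t : R | x < `|t|].
Proof.
rewrite (_ : [set t : R | x < `|t|] = setT `&` (@Num.norm _ R) @^-1` `]x, +oo[%classic).
  by apply: normr_measurable => //; exact: measurable_itv.
by apply/seteqP; split => t /=; rewrite in_itv /= andbT; [move=> ->|case].
Qed.

End normr_measurable_sets.

Section conditional_law.
Variables (R : realType) (mu : probability R R) (a y : R).
Hypothesis a_neq0 : a != 0.

Let F x := phi (y - a * x).
Let h := h0 mu y a.
Let K := expR (y ^+ 2 / 2) / Num.sqrt (pi *+ 2).
Let C := Num.sqrt (2 / pi) * expR (y ^+ 2 / 2) / h.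
Let moment n := Rintegral mu setT (fun x => `|x| ^+ n * F x).

Lemma h_ge0 : 0 <= h.
Proof. by apply: Rintegral_ge0 => x _; exact: phi_ge0. Qed.

Lemma measurable_F : measurable_fun setT F.
Proof.
apply: measurable_funM => //; apply: measurableT_comp => //.
apply: measurable_funM => //; apply: measurable_funN; apply: measurable_funX.
exact: measurable_funB.
Qed.

Lemma measurable_weighted (g : R -> R) :
  measurable_fun setT g -> measurable_fun setT (fun x => g x * F x).
Proof. by move=> mg; apply: measurable_funM mg measurable_F. Qed.

Lemma weighted_moment_le n x :
  `|x| ^+ n * F x <= K * ((Num.sqrt 2 / `|a|) ^+ n * Num.sqrt n`!%:R).
Proof.
apply: le_trans (_ : `|x| ^+ n * (K * expR (- (a ^+ 2 * x ^+ 2) / 4)) <= _).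
  by rewrite ler_wpM2l ?exprn_ge0 ?phi_shift_le.
rewrite mulrCA ler_wpM2l ?expr_gauss_le //.
by rewrite divr_ge0 ?expR_ge0 ?sqrtr_ge0.
Qed.

Lemma integrable_weighted_moment n :
  mu.-integrable setT (EFin \o (fun x => `|x| ^+ n * F x)).
Proof.
apply: (le_integrable measurableT _ _ (finite_measure_integrable_cst mu
  (K * ((Num.sqrt 2 / `|a|) ^+ n * Num.sqrt n`!%:R)) measurableT)).
- apply/measurable_EFinP; apply: measurable_weighted.
  by apply: measurable_funX; exact: normr_measurable.
- move=> x _; rewrite /= lee_fin ger0_norm ?mulr_ge0 ?exprn_ge0 ?phi_ge0 //.
  exact: le_trans (weighted_moment_le n x) (ler_norm _).
Qed.

Lemma cond_prob_tail_le {A : set R} {l : R} : measurable A -> 0 <= l ->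
  (forall t, A t -> l <= `|t|) ->
  (cond_prob mu a y A <= (C * expR (- (a ^+ 2 * l ^+ 2) / 4))%:E)%E.
Proof.
move=> mA l_ge0 Al; set E := expR _.
have K_ge0 : 0 <= K by rewrite divr_ge0 ?expR_ge0 ?sqrtr_ge0.
apply: (@le_trans _ _ ((h^-1 * (K * E))%:E)).
  rewrite /cond_prob EFinM lee_wpmul2l ?lee_fin ?invr_ge0 ?h_ge0 //.
  apply: integral_le_bound_probability => //.
  - exact: measurable_funS measurable_F.
  - by rewrite mulr_ge0 ?expR_ge0.
  move=> t At; rewrite phi_ge0 (le_trans (phi_shift_le _ _ _)) //.
  rewrite ler_wpM2l // ler_expR.
  have l2_le : l ^+ 2 <= t ^+ 2.
    by rewrite -[t ^+ 2]real_normK ?num_real // lerXn2r ?nnegrE ?Al.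
  by have := ler_wpM2l (sqr_ge0 a) l2_le; lra.
rewrite lee_fin /C /K.
have -> : h^-1 * (expR (y ^+ 2 / 2) / Num.sqrt (pi *+ 2) * E) =
  (expR (y ^+ 2 / 2) * E / h) * (Num.sqrt (pi *+ 2))^-1 by ring.
have -> : Num.sqrt (2 / pi) * expR (y ^+ 2 / 2) / h * E =
  (expR (y ^+ 2 / 2) * E / h) * Num.sqrt (2 / pi) by ring.
by rewrite ler_wpM2l ?invr_sqrt2pi_le ?divr_ge0 ?mulr_ge0 ?expR_ge0 ?h_ge0.
Qed.

Lemma cond_prob_ge_le (x : R) : 0 < x ->
  (cond_prob mu a y [set t : R | (x <= `|t|)%R] <=
   (C * expR (- (a ^+ 2 * x ^+ 2) / 4))%:E)%E.
Proof.
by move=> x_gt0; apply: cond_prob_tail_le (measurable_normr_ge x) (ltW x_gt0) _.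
Qed.

Lemma subgaussian_cond_prob : subgaussian_law (cond_prob mu a y).
Proof.
have C_ge0 : 0 <= C by rewrite divr_ge0 ?h_ge0 // mulr_ge0 ?sqrtr_ge0 ?expR_ge0.
exists (a ^+ 2 / 4), (C + 1); split; first by rewrite divr_gt0 ?exprn_even_gt0.
split=> [|l l_gt0]; first by rewrite ltr_pwDr.
apply: le_trans (cond_prob_tail_le (measurable_normr_gt l) (ltW l_gt0) _) _.
  by move=> t /ltW.
have -> : - (a ^+ 2 / 4) * l ^+ 2 = - (a ^+ 2 * l ^+ 2) / 4 by ring.
by rewrite lee_fin ler_wpM2r ?expR_ge0 // lerDl.
Qed.

Lemma cond_abs_moment_le n : (0 < n)%N ->
  (cond_abs_moment mu a y n <=
   (n%:R * expR (y ^+ 2 / 2) / h * (Num.sqrt 2 / `|a|) ^+ n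
    * Num.sqrt (n.-1)`!%:R)%:E)%E.
Proof.
case: n => // k _ /=; set c := Num.sqrt 2 / `|a|.
have c_ge0 : 0 <= c by rewrite divr_ge0 ?sqrtr_ge0.
apply: (@le_trans _ _ ((h^-1 * (K * (c ^+ k.+1 * Num.sqrt k.+1`!%:R)))%:E)).
  rewrite /cond_abs_moment EFinM lee_wpmul2l ?lee_fin ?invr_ge0 ?h_ge0 //.
  apply: integral_le_bound_probability => //.
  - by apply: measurable_weighted; apply: measurable_funX; exact: normr_measurable.
  - by rewrite !mulr_ge0 ?divr_ge0 ?expR_ge0 ?exprn_ge0 ?sqrtr_ge0.
  - by move=> t _; rewrite weighted_moment_le mulr_ge0 ?exprn_ge0 ?phi_ge0.
(* sqrt (k+1)! = sqrt (k+1) sqrt k!, and sqrt (k+1) / sqrt (2 pi) <= k + 1 *)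
rewrite lee_fin /K factS natrM sqrtrM ?ler0n //.
set e := expR _; set s := Num.sqrt (pi *+ 2); set q := Num.sqrt k`!%:R.
have -> : h^-1 * (e / s * (c ^+ k.+1 * (Num.sqrt k.+1%:R * q))) =
  (e / h * c ^+ k.+1 * q) * (Num.sqrt k.+1%:R * s^-1) by ring.
have -> : k.+1%:R * e / h * c ^+ k.+1 * q = (e / h * c ^+ k.+1 * q) * k.+1%:R by ring.
rewrite ler_wpM2l ?mulr_ge0 ?invr_ge0 ?exprn_ge0 ?sqrtr_ge0 ?expR_ge0 ?h_ge0 //.
have sqrt_le : Num.sqrt k.+1%:R <= k.+1%:R :> R by rewrite sqrtr_le_self ?ler1n.
apply: le_trans sqrt_le.
rewrite ler_piMr ?sqrtr_ge0 // invf_le1 ?sqrt2pi_ge1 //.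
exact: lt_le_trans sqrt2pi_ge1.
Qed.

Lemma integrable_F : mu.-integrable setT (EFin \o F).
Proof.
apply: le_integrable (integrable_weighted_moment 0) => //.
- by apply/measurable_EFinP; exact: measurable_F.
- by move=> x _; rewrite /= expr0 mul1r.
Qed.

Lemma integrable_xF : mu.-integrable setT (EFin \o (fun x => x * F x)).
Proof.
apply: le_integrable (integrable_weighted_moment 1) => //.
- by apply/measurable_EFinP; apply: measurable_funM measurable_F.
- move=> x _; rewrite /= lee_fin expr1 [leRHS]ger0_norm ?mulr_ge0 ?phi_ge0 //.
  by rewrite normrM [`|F x|]ger0_norm ?phi_ge0.
Qed.

Lemma central_weight_le (c x : R) n :
  `|x - c| ^+ n * F x * 2 <= 2 ^+ n * (`|x| ^+ n * F x + `|c| ^+ n * F x).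
Proof.
rewrite mulrAC -mulrDl mulrA ler_wpM2r ?phi_ge0 //.
apply: le_trans _ (exprDn_le _ _ n (normr_ge0 x) (normr_ge0 c)).
by rewrite ler_wpM2r // lerXn2r ?nnegrE ?addr_ge0 ?ler_normB.
Qed.

Lemma integrable_central_bound (c : R) n : mu.-integrable setT
  (EFin \o (fun x => 2 ^+ n * (`|x| ^+ n * F x + `|c| ^+ n * F x))).
Proof.
exact: integrableZl _ _ (integrableD _ (integrable_weighted_moment n)
  (integrableZl _ _ integrable_F)).
Qed.

Lemma integrable_central_moment (c : R) n :
  mu.-integrable setT (EFin \o (fun x => `|x - c| ^+ n * F x)).
Proof.
apply: le_integrable (integrable_central_bound c n) => //.
- apply/measurable_EFinP; apply: measurable_weighted.
  by apply: measurable_funX; apply: measurableT_comp => //; exact: measurable_funB.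
- move=> x _; rewrite /= lee_fin [leLHS]ger0_norm ?[leRHS]ger0_norm
    ?mulr_ge0 ?addr_ge0 ?mulr_ge0 ?exprn_ge0 ?phi_ge0 //.
  apply: le_trans _ (central_weight_le c x n).
  by rewrite ler_peMr ?ler1n ?mulr_ge0 ?exprn_ge0 ?phi_ge0.
Qed.

Lemma central_moment_le (c : R) n :
  Rintegral mu setT (fun x => `|x - c| ^+ n * F x) * 2 <=
  2 ^+ n * (moment n + `|c| ^+ n * h).
Proof.
have Icent := integrable_central_moment c n.
have Imom := integrable_weighted_moment n.
have IcF : mu.-integrable setT (EFin \o (fun x => `|c| ^+ n * F x)).
  exact: integrableZl integrable_F.
have Isum : mu.-integrable setT
    (EFin \o (fun x => `|x| ^+ n * F x + `|c| ^+ n * F x)).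
  exact: integrableD Imom IcF.
rewrite -(RintegralZr 2 measurableT Icent).
apply: le_trans (le_Rintegral measurableT (integrableZr measurableT _ Icent)
  (integrable_central_bound c n) (fun x _ => central_weight_le c x n)) _.
by rewrite RintegralZl // RintegralD // RintegralZl //; exact: integrable_F.
Qed.

Lemma normr_cond_mean_le : `|cond_mean mu a y| <= h^-1 * moment 1.
Proof.
rewrite normrM ger0_norm ?invr_ge0 ?h_ge0 // ler_wpM2l ?invr_ge0 ?h_ge0 //.
apply: le_trans (le_normr_Rintegral measurableT integrable_xF) _.
rewrite (_ : Rintegral _ _ _ = moment 1) //; apply: eq_Rintegral => x _.
by rewrite normrM expr1 [`|F x|]ger0_norm ?phi_ge0.
Qed.

Lemma expr_abs_mean_le k : (h^-1 * moment 1) ^+ k.+1 * h <= moment k.+1.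
Proof.
have moment_ge0 n : 0 <= moment n.
  by apply: Rintegral_ge0 => x _; rewrite mulr_ge0 ?exprn_ge0 ?phi_ge0.
set c := h^-1 * moment 1.
have [->|h_neq0] := eqVneq h 0; first by rewrite mulr0.
have c_ge0 : 0 <= c by rewrite mulr_ge0 ?invr_ge0 ?h_ge0.
have I1 := integrable_weighted_moment 1; have IF := integrable_F.
have IcF := integrableZl measurableT c IF.
have Idiff := integrableB measurableT I1 IcF.
(* integrate the tangent line of u |-> u^(k+1) at u = c against F;
   since c h = moment 1, its integral is c^(k+1) h *)
have tangentE : Rintegral mu setT (fun x => c ^+ k.+1 * F x +
    k.+1%:R * c ^+ k * (`|x| ^+ 1 * F x - c * F x)) = c ^+ k.+1 * h.
  rewrite RintegralD //; last exact: integrableZl Idiff.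
    rewrite RintegralZl // RintegralZl // RintegralB // RintegralZl //.
    have ch : c * h = moment 1 by rewrite mulrAC mulVf ?mul1r.
    by rewrite [Rintegral _ _ F]/(h0 mu y a) -/h ch subrr mulr0 addr0.
  exact: integrableZl IF.
rewrite -tangentE; apply: le_Rintegral => //.
- exact: integrableD (integrableZl _ _ IF) (integrableZl _ _ Idiff).
- exact: integrable_weighted_moment.
move=> x _.
have -> : c ^+ k.+1 * F x + k.+1%:R * c ^+ k * (`|x| ^+ 1 * F x - c * F x) =
  (c ^+ k.+1 + k.+1%:R * c ^+ k * (`|x| - c)) * F x by rewrite expr1; ring.
by rewrite ler_wpM2r ?phi_ge0 ?expr_ge_tangent.
Qed.

Lemma cond_central_abs_moment_le n : (0 < n)%N ->
  (cond_central_abs_moment mu a y n <= (2 ^+ n)%:E * cond_abs_moment mu a y n)%E.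
Proof.
case: n => // k _; set m := cond_mean mu a y.
rewrite /cond_central_abs_moment /cond_abs_moment -/m.
rewrite !integral_EFin_Rintegral ?integrable_central_moment
  ?integrable_weighted_moment //.
rewrite -!EFinM lee_fin mulrCA ler_wpM2l ?invr_ge0 ?h_ge0 //.
have mean_le : `|m| ^+ k.+1 * h <= moment k.+1.
  apply: le_trans (expr_abs_mean_le k); rewrite ler_wpM2r ?h_ge0 //.
  by rewrite lerXn2r ?nnegrE ?normr_cond_mean_le // (le_trans _ normr_cond_mean_le).
have central_le := central_moment_le m k.+1.
have two_ge0 := exprn_ge0 k.+1 (ler0n R 2).
suff : Rintegral mu setT (fun x => `|x - m| ^+ k.+1 * F x) <= 2 ^+ k.+1 * moment k.+1
  by []; nra.
Qed.

End conditional_law.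

Theorem proposition6 (R : realType) (d : measure_display) (T : measurableType d)
    (P : probability T R) (X : {RV P >-> R}) (a : R) :
  a != 0 ->
  forall y : R,
    subgaussian_law (cond_prob (distribution P X) a y) /\
    (forall x : R, 0 < x ->
       (cond_prob (distribution P X) a y [set t : R | (x <= `|t|)%R] <=
        (Num.sqrt (2 / pi) * expR (y ^+ 2 / 2) / h0 (distribution P X) y a
          * expR (- (a ^+ 2 * x ^+ 2) / 4))%:E)%E) /\
    (forall n : nat, (0 < n)%N ->
       (cond_abs_moment (distribution P X) a y n <=
        (n%:R * expR (y ^+ 2 / 2) / h0 (distribution P X) y a
          * (Num.sqrt 2 / `|a|) ^+ n * Num.sqrt ((n.-1)`!)%:R)%:E)%E) /\
    (forall n : nat, (0 < n)%N ->
       (cond_central_abs_moment (distribution P X) a y n <=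
        (2 ^+ n)%:E * cond_abs_moment (distribution P X) a y n)%E).
Proof.
move=> a_neq0 y; split; first exact: subgaussian_cond_prob.
split; first exact: cond_prob_ge_le.
split; first exact: cond_abs_moment_le.
exact: cond_central_abs_moment_le.
Qed.
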